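(* Let $\mathcal{L}\subseteq\mathcal{L}_c$ be a class of latency functions and consider a parallel-link network with $n=2$ links, unit demand and $\ell_1,\ell_2\in\mathcal{L}$. Let $x^*$ be an optimal flow, let $t\in\mathcal{T}(\infty)$ and suppose $x_1(t)>0$, $x_2(t)>0$. If there is $i\in\{1,2\}$ with $x_i(t)>x^*_i$ and $x_i(t)\ge\frac12$, then $$C(x(t))\le\frac{1}{1-\mu_2(\mathcal{L})}\,C(x^* ).$$
   Context: $\mathcal{L}_c$: strictly increasing, convex, continuously differentiable functions $\mathbb{R}_+\to\mathbb{R}_+$. Flows $x\in\mathbb{R}^2_+$ with $x_1+x_2=1$; $C(x)=\sum_i\ell_i(x_i)x_i$; $x^*$ minimizes $C$ over flows. For tolls $t$, $x(t)$ is the unique Wardrop equilibrium for $t$ (for all $i,j$ with $x_i>0$: $\ell_i(x_i)+t_i\le\ell_j(x_j)+t_j$); $\Pi_i(t)=t_ix_i(t)$; $\mathcal{T}(\infty)$ is the set of $t\in\mathbb{R}^2_+$ with $\Pi_i(t_i,t_{-i})\ge\Pi_i(t'_i,t_{-i})$ for all $i$ and all $t'_i\ge0$ (flow recomputed). For $\ell\in\mathcal{L}$ define $\mu_2(\ell)=\sup_{x\ge\frac12,\ 0\le x^*\le x}\frac{(\ell(x)-\ell(x^* ))(x^*+1-2x)}{\ell(x)}$, and $\mu_2(\mathcal{L})=\sup_{\ell\in\mathcal{L}}\mu_2(\ell)$ (which lies in $[0,1]$). *)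

From Stdlib Require Import Reals Lra.
Open Scope R_scope.

(* Latency functions are represented as f : R -> R; only the values on
   [0, +oo) matter. *)

Definition strictly_incr_nonneg (f : R -> R) : Prop :=
  forall x y, 0 <= x -> x < y -> f x < f y.

Definition convex_nonneg (f : R -> R) : Prop :=
  forall x y lam, 0 <= x -> 0 <= y -> 0 <= lam <= 1 ->
    f (lam * x + (1 - lam) * y) <= lam * f x + (1 - lam) * f y.

(* Continuously differentiable on R_+: f agrees on [0,+oo) with a C^1
   function on R (equivalent to being C^1 on [0,+oo) with a one-sided
   derivative at 0). *)
Definition C1_nonneg (f : R -> R) : Prop :=
  exists g g' : R -> R,
    (forall x, 0 <= x -> g x = f x) /\
    (forall x, derivable_pt_lim g x (g' x)) /\
    continuity g'.

Definition in_Lc (f : R -> R) : Prop :=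
  (forall x, 0 <= x -> 0 <= f x) /\
  strictly_incr_nonneg f /\ convex_nonneg f /\ C1_nonneg f.

Definition is_flow (x1 x2 : R) : Prop := 0 <= x1 /\ 0 <= x2 /\ x1 + x2 = 1.

Definition cost (l1 l2 : R -> R) (x1 x2 : R) : R := l1 x1 * x1 + l2 x2 * x2.

Definition is_optimal (l1 l2 : R -> R) (xs1 xs2 : R) : Prop :=
  is_flow xs1 xs2 /\
  forall y1 y2, is_flow y1 y2 -> cost l1 l2 xs1 xs2 <= cost l1 l2 y1 y2.

Definition is_WE (l1 l2 : R -> R) (t1 t2 x1 x2 : R) : Prop :=
  is_flow x1 x2 /\
  (0 < x1 -> l1 x1 + t1 <= l2 x2 + t2) /\
  (0 < x2 -> l2 x2 + t2 <= l1 x1 + t1).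

(* t in T(infinity): nonnegative tolls such that no link owner can raise its
   revenue t_i x_i(t) by unilaterally changing its toll to any t_i' >= 0,
   the flow being recomputed as the (unique) Wardrop equilibrium. *)
Definition in_T_infty (l1 l2 : R -> R) (t1 t2 : R) : Prop :=
  0 <= t1 /\ 0 <= t2 /\
  forall x1 x2, is_WE l1 l2 t1 t2 x1 x2 ->
    (forall t1' y1 y2, 0 <= t1' -> is_WE l1 l2 t1' t2 y1 y2 ->
        t1' * y1 <= t1 * x1) /\
    (forall t2' y1 y2, 0 <= t2' -> is_WE l1 l2 t1 t2' y1 y2 ->
        t2' * y2 <= t2 * x2).

(* The set of values whose supremum is mu_2(l). *)
Definition mu2_values (l : R -> R) (r : R) : Prop :=
  exists x xs, 1/2 <= x /\ 0 <= xs <= x /\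
    r = (l x - l xs) * (xs + 1 - 2 * x) / l x.

(* The set of values whose supremum is mu_2(L) = sup_{l in L} mu_2(l)
   (= sup of the union of the sets above). *)
Definition mu2_class_values (L : (R -> R) -> Prop) (r : R) : Prop :=
  exists l, L l /\ mu2_values l r.

(* Say link 1 carries the larger flow x1 >= 1/2 and x1 > xs1, where xs is the
   optimal flow.  Shifting a small amount e of traffic from link 1 to link 2
   can be enforced either by owner 1 raising his toll or by owner 2 lowering
   hers, by the same amount a(e); that neither deviation is profitable yields
   (t1 - t2) e >= a(e) (x1 - x2 - 2e).  By convexity a(e) >= e K with K the
   secant slope of l1 on [xs1, x1], and a(e) -> 0 by continuity, so
   t1 - t2 >= K (x1 - x2).  Substituting this into C(x) - C(xs) bounds it by
   (l1(x1) - l1(xs1)) (xs1 + 1 - 2 x1) <= mu l1(x1) <= mu C(x). *)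

From Stdlib Require Import Reals Lra.
Open Scope R_scope.

Lemma C1_nonneg_continuous (f : R -> R) (x : R) :
  C1_nonneg f -> 0 <= x ->
  forall eps, 0 < eps -> exists d, 0 < d /\
    forall y, 0 <= y -> Rabs (y - x) < d -> Rabs (f y - f x) < eps.
Proof.
  intros [g [g' [Hgf [Hg _]]]] Hx eps Heps.
  assert (Hc : continuity_pt g x).
  { apply derivable_continuous_pt. exists (g' x). apply Hg. }
  destruct (Hc eps Heps) as [d [Hd Hdist]].
  exists d; split; [exact Hd |].
  intros y Hy Hyx.
  rewrite <- (Hgf y Hy), <- (Hgf x Hx).
  destruct (Req_dec y x) as [-> | Hneq].
  - unfold Rminus. rewrite Rplus_opp_r, Rabs_R0. exact Heps.
  - apply (Hdist y). split; [split; [exact I | auto] | exact Hyx].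
Qed.

Lemma convex_nonneg_secant_le (f : R -> R) (xs x e : R) :
  convex_nonneg f -> 0 <= xs -> 0 < e <= x - xs ->
  e * ((f x - f xs) / (x - xs)) <= f x - f (x - e).
Proof.
  intros Hf Hxs He.
  assert (Hlam : 0 <= e / (x - xs) <= 1).
  { assert (Hprod : e / (x - xs) * (x - xs) = e) by (field; lra). split; nra. }
  pose proof (Hf xs x (e / (x - xs)) Hxs ltac:(lra) Hlam) as Hcvx.
  replace (e / (x - xs) * xs + (1 - e / (x - xs)) * x) with (x - e) in Hcvx
    by (field; lra).
  replace (e * ((f x - f xs) / (x - xs))) with (e / (x - xs) * (f x - f xs))
    by (field; lra).
  lra.
Qed.

Lemma strictly_incr_nonneg_le (f : R -> R) (x y : R) :
  strictly_incr_nonneg f -> 0 <= x <= y -> f x <= f y.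
Proof.
  intros Hf Hxy. destruct (Req_dec x y) as [-> | Hne]; [lra |].
  left. apply Hf; lra.
Qed.

Lemma in_Lc_pos (l : R -> R) (x : R) : in_Lc l -> 0 < x -> 0 < l x.
Proof.
  intros [Hnn [Hincr _]] Hx.
  pose proof (Hnn 0 (Rle_refl 0)). pose proof (Hincr 0 x (Rle_refl 0) Hx). lra.
Qed.

Lemma is_WE_of_equal_costs (l1 l2 : R -> R) (t1 t2 y1 y2 : R) :
  0 <= y1 -> 0 <= y2 -> y1 + y2 = 1 -> l1 y1 + t1 = l2 y2 + t2 ->
  is_WE l1 l2 t1 t2 y1 y2.
Proof. intros. repeat split; intros; lra. Qed.

Lemma is_WE_swap (l1 l2 : R -> R) (t1 t2 x1 x2 : R) :
  is_WE l1 l2 t1 t2 x1 x2 -> is_WE l2 l1 t2 t1 x2 x1.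
Proof. intros [[? [? ?]] [? ?]]. repeat split; auto; lra. Qed.

Lemma in_T_infty_swap (l1 l2 : R -> R) (t1 t2 : R) :
  in_T_infty l1 l2 t1 t2 -> in_T_infty l2 l1 t2 t1.
Proof.
  intros [Ht1 [Ht2 HT]]. split; [exact Ht2 | split; [exact Ht1 |]].
  intros y2 y1 HWE.
  destruct (HT y1 y2 (is_WE_swap _ _ _ _ _ _ HWE)) as [H1 H2]. split.
  - intros t2' z2 z1 Ht W. exact (H2 t2' z1 z2 Ht (is_WE_swap _ _ _ _ _ _ W)).
  - intros t1' z2 z1 Ht W. exact (H1 t1' z1 z2 Ht (is_WE_swap _ _ _ _ _ _ W)).
Qed.

Lemma cost_swap (l1 l2 : R -> R) (x1 x2 : R) :
  cost l1 l2 x1 x2 = cost l2 l1 x2 x1.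
Proof. unfold cost. ring. Qed.

Lemma cost_sub_le_of_toll_gap (l1 l2 : R -> R) (t1 t2 x1 x2 xs1 xs2 : R) :
  x1 + x2 = 1 -> xs1 + xs2 = 1 -> 0 <= xs2 ->
  l1 x1 + t1 = l2 x2 + t2 -> l2 x2 <= l2 xs2 ->
  (l1 x1 - l1 xs1) * (x1 - x2) <= (t1 - t2) * (x1 - xs1) ->
  cost l1 l2 x1 x2 - cost l1 l2 xs1 xs2
    <= (l1 x1 - l1 xs1) * (xs1 + 1 - 2 * x1).
Proof.
  intros Hx Hxs Hxs2 Heq Hl2 Hgap.
  assert (Hid : cost l1 l2 x1 x2 - cost l1 l2 xs1 xs2
     = (t2 - t1) * (x1 - xs1) + (l1 x1 - l1 xs1) * xs1 - (l2 xs2 - l2 x2) * xs2).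
  { unfold cost. replace (l2 x2) with (l1 x1 + t1 - t2) by lra.
    replace xs2 with (1 - xs1) by lra. replace x2 with (1 - x1) by lra. ring. }
  rewrite Hid. replace x2 with (1 - x1) in Hgap by lra. nra.
Qed.

Lemma mu2_lub_nonneg (L : (R -> R) -> Prop) (l : R -> R) (mu : R) :
  L l -> is_lub (mu2_class_values L) mu -> 0 <= mu.
Proof.
  intros Hl [Hub _]. apply Hub. exists l. split; [exact Hl |].
  exists 1, 1. repeat split; lra.
Qed.

Lemma mu2_term_le_lub (L : (R -> R) -> Prop) (l : R -> R) (mu x xs : R) :
  L l -> is_lub (mu2_class_values L) mu ->
  1/2 <= x -> 0 <= xs <= x -> 0 < l x ->
  (l x - l xs) * (xs + 1 - 2 * x) <= mu * l x.
Proof.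
  intros Hl [Hub _] Hx Hxs Hpos.
  assert (Hval : (l x - l xs) * (xs + 1 - 2 * x) / l x <= mu).
  { apply Hub. exists l. split; [exact Hl |]. exists x, xs. repeat split; lra. }
  replace ((l x - l xs) * (xs + 1 - 2 * x))
    with ((l x - l xs) * (xs + 1 - 2 * x) / l x * l x) by (field; lra).
  apply Rmult_le_compat_r; lra.
Qed.

Section EquilibriumTolls.

Variables (l1 l2 : R -> R) (t1 t2 x1 x2 : R).
Hypotheses (Hl1 : in_Lc l1) (Hl2 : in_Lc l2).
Hypothesis HT : in_T_infty l1 l2 t1 t2.
Hypothesis HWE : is_WE l1 l2 t1 t2 x1 x2.
Hypotheses (Hx1 : 0 < x1) (Hx2 : 0 < x2).

Lemma equilibrium_costs_equal : l1 x1 + t1 = l2 x2 + t2.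
Proof. destruct HWE as [_ [E1 E2]]. specialize (E1 Hx1). specialize (E2 Hx2). lra. Qed.

Lemma toll_gap_shift_bound (e : R) :
  0 < e <= x1 ->
  (t1 - t2) * e >=
    ((l1 x1 - l1 (x1 - e)) + (l2 (x2 + e) - l2 x2)) * (x1 - x2 - 2 * e).
Proof.
  intros He.
  destruct HT as [Ht1 [Ht2 HTx]]. destruct (HTx x1 x2 HWE) as [H1 H2].
  destruct HWE as [[_ [_ Hx]] _].
  pose proof equilibrium_costs_equal as Heq.
  destruct Hl1 as [_ [Hi1 _]]. destruct Hl2 as [_ [Hi2 _]].
  set (a := (l1 x1 - l1 (x1 - e)) + (l2 (x2 + e) - l2 x2)).
  assert (Ha : 0 <= a).
  { pose proof (strictly_incr_nonneg_le l1 (x1 - e) x1 Hi1 ltac:(lra)).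
    pose proof (strictly_incr_nonneg_le l2 x2 (x2 + e) Hi2 ltac:(lra)).
    unfold a. lra. }
  (* raising t1 by a, or lowering t2 by a, moves the equilibrium to (x1 - e, x2 + e) *)
  assert (Hraise : a * (x1 - e) <= t1 * e).
  { assert (W : is_WE l1 l2 (t1 + a) t2 (x1 - e) (x2 + e))
      by (apply is_WE_of_equal_costs; unfold a; lra).
    pose proof (H1 (t1 + a) (x1 - e) (x2 + e) ltac:(lra) W). nra. }
  assert (Hlower : t2 * e <= a * (x2 + e)).
  { destruct (Rle_lt_dec a t2) as [Hat | Hat].
    - assert (W : is_WE l1 l2 t1 (t2 - a) (x1 - e) (x2 + e))
        by (apply is_WE_of_equal_costs; unfold a; lra).
      pose proof (H2 (t2 - a) (x1 - e) (x2 + e) ltac:(lra) W). nra.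
    - nra. }
  nra.
Qed.

Lemma toll_gap_ge_secant (xs1 : R) :
  x2 <= x1 -> 0 <= xs1 < x1 ->
  (l1 x1 - l1 xs1) / (x1 - xs1) * (x1 - x2) <= t1 - t2.
Proof.
  intros Hx12 Hxs1.
  destruct Hl1 as [_ [_ [Hcvx1 HC1]]]. destruct Hl2 as [_ [Hi2 [_ HC2]]].
  set (K := (l1 x1 - l1 xs1) / (x1 - xs1)).
  apply Rle_plus_epsilon. intros eta Heta.
  destruct (C1_nonneg_continuous l1 x1 HC1 ltac:(lra) (eta / 4) ltac:(lra))
    as [d1 [Hd1 Hcont1]].
  destruct (C1_nonneg_continuous l2 x2 HC2 ltac:(lra) (eta / 4) ltac:(lra))
    as [d2 [Hd2 Hcont2]].
  set (e := Rmin (Rmin (d1 / 2) (d2 / 2)) (x1 - xs1)).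
  assert (He : 0 < e) by (unfold e; repeat apply Rmin_pos; lra).
  assert (Hed : e <= d1 / 2 /\ e <= d2 / 2 /\ e <= x1 - xs1).
  { unfold e. pose proof (Rmin_l (Rmin (d1 / 2) (d2 / 2)) (x1 - xs1)).
    pose proof (Rmin_r (Rmin (d1 / 2) (d2 / 2)) (x1 - xs1)).
    pose proof (Rmin_l (d1 / 2) (d2 / 2)). pose proof (Rmin_r (d1 / 2) (d2 / 2)).
    lra. }
  assert (Hsmall1 : Rabs (l1 (x1 - e) - l1 x1) < eta / 4).
  { apply Hcont1; [lra |]. replace (x1 - e - x1) with (- e) by ring.
    rewrite Rabs_Ropp, Rabs_right; lra. }
  assert (Hsmall2 : Rabs (l2 (x2 + e) - l2 x2) < eta / 4).
  { apply Hcont2; [lra |]. replace (x2 + e - x2) with e by ring.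
    rewrite Rabs_right; lra. }
  apply Rabs_def2 in Hsmall1. apply Rabs_def2 in Hsmall2.
  pose proof (toll_gap_shift_bound e ltac:(lra)) as Hshift.
  pose proof (convex_nonneg_secant_le l1 xs1 x1 e Hcvx1 ltac:(lra) ltac:(lra)) as Hsec.
  fold K in Hsec.
  pose proof (Hi2 x2 (x2 + e) ltac:(lra) ltac:(lra)).
  set (a := (l1 x1 - l1 (x1 - e)) + (l2 (x2 + e) - l2 x2)) in Hshift.
  assert (Ha : e * K <= a) by (unfold a; lra).
  assert (Hdiv : K * (x1 - x2) - 2 * a <= t1 - t2).
  { apply (Rmult_le_reg_l e); [exact He |]. nra. }
  unfold a in Hdiv. lra.
Qed.

End EquilibriumTolls.

Lemma cost_bound_link1_overloaded (L : (R -> R) -> Prop) (l1 l2 : R -> R)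
  (xs1 xs2 t1 t2 x1 x2 mu : R) :
  (forall l, L l -> in_Lc l) -> L l1 -> L l2 ->
  is_flow xs1 xs2 -> in_T_infty l1 l2 t1 t2 -> is_WE l1 l2 t1 t2 x1 x2 ->
  0 < x1 -> 0 < x2 -> xs1 < x1 -> 1/2 <= x1 ->
  is_lub (mu2_class_values L) mu -> mu < 1 ->
  cost l1 l2 x1 x2 <= / (1 - mu) * cost l1 l2 xs1 xs2.
Proof.
  intros HL HL1 HL2 [Hxs1 [Hxs2 Hxs]] HT HWE Hx1 Hx2 Hgt Hhalf Hlub Hmu.
  pose proof (HL l1 HL1) as Hl1. pose proof (HL l2 HL2) as Hl2.
  pose proof HWE as [[_ [_ Hx]] _].
  pose proof (equilibrium_costs_equal l1 l2 t1 t2 x1 x2 HWE Hx1 Hx2) as Heq.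
  pose proof (toll_gap_ge_secant l1 l2 t1 t2 x1 x2 Hl1 Hl2 HT HWE Hx1 Hx2 xs1
    ltac:(lra) ltac:(lra)) as Hgap.
  set (A := l1 x1 - l1 xs1) in Hgap.
  destruct Hl1 as [_ [Hi1 _]]. destruct Hl2 as [_ [Hi2 _]].
  assert (HA : 0 <= A) by (unfold A; pose proof (Hi1 xs1 x1 Hxs1 Hgt); lra).
  assert (HK : 0 <= A / (x1 - xs1)).
  { unfold Rdiv. apply Rmult_le_pos; [lra | left; apply Rinv_0_lt_compat; lra]. }
  assert (Hgap' : A * (x1 - x2) <= (t1 - t2) * (x1 - xs1)).
  { replace (A * (x1 - x2)) with (A / (x1 - xs1) * (x1 - x2) * (x1 - xs1))
      by (field; lra).
    apply Rmult_le_compat_r; lra. }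
  assert (Hl2x : l2 x2 <= l2 xs2) by (left; apply Hi2; lra).
  pose proof (cost_sub_le_of_toll_gap l1 l2 t1 t2 x1 x2 xs1 xs2
    Hx Hxs Hxs2 Heq Hl2x Hgap') as Hsub.
  pose proof (in_Lc_pos l1 x1 (HL l1 HL1) Hx1) as Hpos.
  pose proof (mu2_term_le_lub L l1 mu x1 xs1 HL1 Hlub Hhalf ltac:(lra) Hpos) as Hmu2.
  pose proof (mu2_lub_nonneg L l1 mu HL1 Hlub) as Hmu0.
  assert (Hlinks : l1 x1 <= l2 x2).
  { pose proof (Rmult_le_pos _ (x1 - x2) HK ltac:(lra)). lra. }
  assert (Hcost : l1 x1 <= cost l1 l2 x1 x2).
  { unfold cost. pose proof (Rmult_le_compat_r x2 _ _ ltac:(lra) Hlinks).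
    assert (l1 x1 * x1 + l1 x1 * x2 = l1 x1)
      by (rewrite <- Rmult_plus_distr_l, Hx; ring).
    lra. }
  assert (Hfin : cost l1 l2 x1 x2 * (1 - mu) <= cost l1 l2 xs1 xs2)
    by (pose proof (Rmult_le_compat_l mu _ _ Hmu0 Hcost); lra).
  apply (Rmult_le_reg_l (1 - mu)); [lra |].
  rewrite <- Rmult_assoc, Rinv_r, Rmult_1_l by lra. lra.
Qed.

Theorem mainTheorem11 :
  forall (L : (R -> R) -> Prop),
    (forall l, L l -> in_Lc l) ->
  forall (l1 l2 : R -> R), L l1 -> L l2 ->
  forall xs1 xs2 : R, is_optimal l1 l2 xs1 xs2 ->
  forall t1 t2 : R, in_T_infty l1 l2 t1 t2 ->
  forall x1 x2 : R, is_WE l1 l2 t1 t2 x1 x2 ->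
    0 < x1 -> 0 < x2 ->
    ((x1 > xs1 /\ x1 >= 1/2) \/ (x2 > xs2 /\ x2 >= 1/2)) ->
  forall mu : R, is_lub (mu2_class_values L) mu -> mu < 1 ->
    cost l1 l2 x1 x2 <= / (1 - mu) * cost l1 l2 xs1 xs2.
Proof.
  intros L HL l1 l2 HL1 HL2 xs1 xs2 [Hflow _] t1 t2 HT x1 x2 HWE Hx1 Hx2 Hcase
    mu Hlub Hmu.
  destruct Hcase as [[Hgt Hhalf] | [Hgt Hhalf]].
  - exact (cost_bound_link1_overloaded L l1 l2 xs1 xs2 t1 t2 x1 x2 mu HL HL1 HL2
      Hflow HT HWE Hx1 Hx2 Hgt ltac:(lra) Hlub Hmu).
  - rewrite (cost_swap l1 l2 x1 x2), (cost_swap l1 l2 xs1 xs2).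
    destruct Hflow as [Hxs1 [Hxs2 Hxs]].
    exact (cost_bound_link1_overloaded L l2 l1 xs2 xs1 t2 t1 x2 x1 mu HL HL2 HL1
      ltac:(repeat split; lra) (in_T_infty_swap l1 l2 t1 t2 HT)
      (is_WE_swap l1 l2 t1 t2 x1 x2 HWE) Hx2 Hx1 Hgt ltac:(lra) Hlub Hmu).
Qed.
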